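(* Let $\eta\in(0,1)$. There exists a positive sequence $(\epsilon_j)_{j\ge1}$ converging to $0$ such that, with probability 1, for every $j$ large enough and every $W\in\Sigma_{\lfloor j(\eta-\epsilon_j)\rfloor}$, one has $\mathcal S_j(\eta,W)\neq\emptyset$.
   Context: Fix $d\ge1$. $\Sigma_j$ is the set of words of length $j$ over the alphabet $\{0,1\}^d$ and $\Sigma^*=\bigcup_{j\ge1}\Sigma_j$; for $w=w_1\cdots w_j\in\Sigma_j$ with $w_k=(w_k^{(1)},\dots,w_k^{(d)})$, $I_w=\prod_{i=1}^d[x_w^{(i)},x_w^{(i)}+2^{-j}]$ where $x_w^{(i)}=\sum_{k=1}^jw_k^{(i)}2^{-k}$. Let $(p_w)_{w\in\Sigma^*}$ be independent Bernoulli random variables with $\mathbb P(p_w=1)=2^{-d(1-\eta)|w|}$. Set $\mathcal S_j(\eta)=\{w\in\Sigma_j:p_w=1\}$ and, for $W\in\Sigma^*$, $\mathcal S_j(\eta,W)=\{w\in\mathcal S_j(\eta): I_w\subset I_W\}$. *)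

From HB Require Import structures.
From mathcomp Require Import all_boot all_order all_algebra.
From mathcomp Require Import all_classical all_reals all_analysis.
Set Implicit Arguments. Unset Strict Implicit. Unset Printing Implicit Defensive.
Import Order.TTheory GRing.Theory Num.Theory.
Local Open Scope classical_set_scope.
Local Open Scope ring_scope.

(* Words of length j over the alphabet {0,1}^d: w k i = w_k^{(i)} (k < j, i < d). *)
Definition word (d j : nat) := {ffun 'I_j -> {ffun 'I_d -> bool}}.

(* Sigma^* : words of any length (the length is the tag); p is only
   constrained on lengths j >= 1. *)
Definition anyword (d : nat) := {j : nat & word d j}.

(* x_w^{(i)} = sum_{k=1}^j w_k^{(i)} 2^{-k}  (0-indexed k here) *)
Definition corner (R : realType) (d j : nat) (w : word d j) (i : 'I_d) : R :=
  \sum_(k < j) ((w k i : nat)%:R * 2 ^- k.+1).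

Definition cube (R : realType) (d j : nat) (w : word d j) : set ('I_d -> R) :=
  [set x | forall i, @corner R d j w i <= x i <= @corner R d j w i + 2 ^- j].

Definition mutually_independent (R : realType) (dT : measure_display)
  (T : measurableType dT) (P : probability T R) (I : eqType) (X : I -> T -> bool) :=
  forall (s : seq I), uniq s -> forall b : I -> bool,
    P (\bigcap_(i in [set` s]) [set t | X i t = b i]) =
    (\prod_(i <- s) P [set t | X i t = b i])%E.

From HB Require Import structures.
From mathcomp Require Import all_boot all_order all_algebra.
From mathcomp Require Import all_classical all_reals all_analysis.
From mathcomp Require Import ring lra zify.
Import Order.TTheory GRing.Theory Num.Theory.
Local Open Scope classical_set_scope.
Local Open Scope ring_scope.

(* Fix a level k <= j(eta - eps_j).  Below a word W of length k lie 2^(d(j-k))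
   words of length j, each retained independently with probability
   q = 2^(-d(1-eta)j), so W has no retained descendant with probability
   (1 - q)^(2^(d(j-k))) <= exp(-2^(d(eta j - k))).  With eps_j = C / sqrt(j+1)
   we have eta j - k >= C sqrt(j+1) / 2, so this is small enough to beat a union
   bound over the 2^(dk) words W: some W of length k is barren with probability
   at most 2^(-j).  These probabilities are summable, and Borel-Cantelli
   concludes. *)

Section words.
Context {d : nat}.

Lemma card_word n : #|{: word d n}| = ((2 ^ d) ^ n)%N.
Proof. by rewrite !card_ffun card_bool !card_ord. Qed.

(* Letter [m] of [w], or the zero letter when [m] is out of range. *)
Definition word_nth {n} (w : word d n) (m : nat) : {ffun 'I_d -> bool} :=
  if insub m is Some i then w i else [ffun=> false].

Lemma word_nthE n (w : word d n) (i : 'I_n) : word_nth w i = w i.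
Proof. by rewrite /word_nth valK. Qed.

Definition word_cat {k} j (W : word d k) (v : word d (j - k)) : word d j :=
  [ffun i : 'I_j => if (i < k)%N then word_nth W i else word_nth v (i - k)].

Lemma word_cat_inj k j (W : word d k) : (k <= j)%N -> injective (word_cat j W).
Proof.
move=> kj v1 v2 e; apply/ffunP => i.
have ki : (k + i < j)%N by have := ltn_ord i; lia.
have := congr1 (fun w : word d j => w (Ordinal ki)) e.
by rewrite !ffunE /= ltnNge leq_addr /= addKn !word_nthE.
Qed.

End words.

Lemma sum_halves_nat (R : numFieldType) k j : (k <= j)%N ->
  \sum_(k <= m < j) (2 : R) ^- m.+1 = 2 ^- k - 2 ^- j.
Proof.
move=> kj; rewrite -opprB -(telescope_sumr (fun m => (2 : R) ^- m)) // -sumrN.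
apply: eq_big_nat => m _; rewrite exprSr invfM opprB.
by field; rewrite expf_neq0 // pnatr_eq0.
Qed.

Lemma corner_word_cat (R : realType) d k j (W : word d k) (v : word d (j - k)) i :
  (k <= j)%N ->
  corner R (word_cat j W v) i =
    corner R W i + \sum_(k <= m < j) ((word_nth v (m - k) i : nat)%:R * 2 ^- m.+1).
Proof.
move=> kj; rewrite /corner.
pose g m : R :=
  (((if (m < k)%N then word_nth W m else word_nth v (m - k)) i : nat)%:R * 2 ^- m.+1).
rewrite (eq_bigr (fun m : 'I_j => g m)); last by move=> m _; rewrite ffunE.
rewrite -(big_mkord xpredT g) (big_cat_nat (leq0n k) kj) /=; congr (_ + _).
  rewrite (eq_bigr (fun m : 'I_k => (word_nth W m i : nat)%:R * 2 ^- m.+1));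
    last by move=> m _; rewrite word_nthE.
  rewrite -(big_mkord xpredT (fun m => (word_nth W m i : nat)%:R * 2 ^- m.+1)).
  by apply: eq_big_nat => m /andP[_ mk]; rewrite /g mk.
by apply: eq_big_nat => m /andP[km _]; rewrite /g ltnNge km.
Qed.

Lemma cube_word_cat_sub (R : realType) d k j (W : word d k) (v : word d (j - k)) :
  (k <= j)%N -> @cube R d j (word_cat j W v) `<=` @cube R d k W.
Proof.
move=> kj x cube_x i; have /andP[] := cube_x i; rewrite corner_word_cat //.
set S := \sum_(_ <= _ < _) _.
have S_ge0 : 0 <= S.
  by apply: sumr_ge0 => m _; rewrite mulr_ge0 ?ler0n ?invr_ge0 ?exprn_ge0.
have S_le : S <= 2 ^- k - 2 ^- j.
  rewrite -sum_halves_nat //; apply: ler_sum => m _.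
  rewrite ler_piMl ?invr_ge0 ?exprn_ge0 //.
  by case: (word_nth v (m - k) i).
move=> lo hi; apply/andP; split; lra.
Qed.

Section finite_events.
Context {dT : measure_display} {T : measurableType dT} {I : Type}.

Lemma measurable_has (A : I -> T -> bool) (s : seq I) :
  (forall i, measurable [set t | A i t]) ->
  measurable [set t | has (fun i => A i t) s].
Proof.
move=> mA; elim: s => [|a s IH] /=.
  by rewrite [X in measurable X](_ : _ = set0) //; apply/seteqP; split => t.
rewrite [X in measurable X](_ : _ = [set t | A a t] `|` [set t | has (A^~ t) s]).
  exact: measurableU.
by apply/seteqP; split => t /= /orP.
Qed.

Lemma measurable_all (A : I -> T -> bool) (s : seq I) :
  (forall i, measurable [set t | A i t]) ->
  measurable [set t | all (fun i => A i t) s].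
Proof.
move=> mA; elim: s => [|a s IH] /=.
  by rewrite [X in measurable X](_ : _ = setT) //; apply/seteqP; split => t.
rewrite [X in measurable X](_ : _ = [set t | A a t] `&` [set t | all (A^~ t) s]).
  exact: measurableI.
by apply/seteqP; split => t /= /andP.
Qed.

Lemma measurable_negb (A : T -> bool) :
  measurable [set t | A t] -> measurable [set t | ~~ A t].
Proof.
move=> mA; rewrite [X in measurable X](_ : _ = ~` [set t | A t]).
  exact: measurableC.
by apply/seteqP; split => t /= /negP.
Qed.

Lemma le_measure_has (R : realType) (mu : {measure set T -> \bar R})
    (A : I -> T -> bool) (s : seq I) :
  (forall i, measurable [set t | A i t]) ->
  (mu [set t | has (fun i => A i t) s] <= \sum_(i <- s) mu [set t | A i t])%E.
Proof.
move=> mA; elim: s => [|a s IH] /=.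
  by rewrite big_nil [X in mu X](_ : _ = set0) ?measure0 //; apply/seteqP; split => t.
rewrite big_cons [X in mu X](_ : _ = [set t | A a t] `|` [set t | has (A^~ t) s]).
  apply: le_trans (measureU2 _ _ _) _ => //; first exact: measurable_has.
  exact: leeD.
by apply/seteqP; split => t /= /orP.
Qed.

End finite_events.

Lemma prob_none_indep {R : realType} {dT : measure_display} {T : measurableType dT}
    (P : probability T R) {I : eqType} (X : I -> T -> bool) (q : R) (s : seq I) :
  mutually_independent P X -> (forall i, measurable [set t | X i t]) -> uniq s ->
  (forall i, i \in s -> P [set t | X i t] = q%:E) ->
  P [set t | all (fun i => ~~ X i t) s] = ((1 - q) ^+ size s)%:E.
Proof.
move=> indep mX s_uniq PX.
have -> : [set t | all (fun i => ~~ X i t) s] =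
          \bigcap_(i in [set` s]) [set t | X i t = false].
  apply/seteqP; split => t /=.
    by move=> /allP none i /= si; apply/negbTE/none.
  by move=> none; apply/allP => i si; apply/negbT/none.
rewrite (indep s s_uniq (fun=> false)).
elim: {s_uniq} s PX => [|a s IH] PX; first by rewrite big_nil.
rewrite big_cons IH /= => [|i si]; last by rewrite PX // inE si orbT.
have -> : [set t | X a t = false] = ~` [set t | X a t].
  by apply/seteqP; split => t /=; [move=> ->|move/negP/negbTE].
by rewrite probability_setC // PX ?mem_head // exprS EFinM.
Qed.

Lemma ae_eventually_notin {R : realType} {dT : measure_display} {T : measurableType dT}
    (mu : {measure set T -> \bar R}) (F : (set T)^nat) :
  (forall n, measurable (F n)) -> (\sum_(n <oo) mu (F n) < +oo)%E ->
  {ae mu, forall t, exists N, forall n, (N <= n)%N -> ~ F n t}.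
Proof.
move=> mF summable; exists (lim_sup_set F); split.
- by apply: bigcap_measurable => // k _; apply: bigcup_measurable.
- exact: lim_sup_set_cvg0.
move=> t /= not_eventually N _; apply: contrapT => not_after_N.
apply: not_eventually; exists N.+1 => n Nn Fnt.
by apply: not_after_N; exists n => //=; lia.
Qed.

Lemma nneseries_halves_lty (R : realType) : (\sum_(n <oo) ((2 : R) ^- n)%:E < +oo)%E.
Proof.
rewrite (@eq_eseriesr _ _ (fun n => (2 / (2 ^ (n + 1))%:R)%:E)) => [|n _].
  by move: (@cvg_geometric_eseries_half R 2 0) => /cvg_lim ->; rewrite ?ltry.
congr EFin.
by rewrite natrX addn1 exprS invfM mulrA divff ?mul1r // pnatr_eq0.
Qed.

Section exponential_bounds.
Context {R : realType}.

Lemma ln2_gt0 : 0 < ln (2 : R).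
Proof. by rewrite ln_gt0 // ltr1n. Qed.

Lemma expr2_expR n : (2 : R) ^+ n = expR (n%:R * ln 2).
Proof. by rewrite expRM_natl lnK // posrE. Qed.

Lemma one_sub_expr_le_expR (q : R) n : q <= 1 -> (1 - q) ^+ n <= expR (- (n%:R * q)).
Proof.
move=> q_le1; rewrite -mulrN expRM_natl lerXn2r ?nnegrE ?expR_ge0 ?subr_ge0 //.
by have := expR_ge1Dx (- q); lra.
Qed.

Lemma expR_neg_le_halves n : expR (- n%:R) <= (2 : R) ^- n.
Proof.
rewrite expRN lef_pV2 ?posrE ?exprn_gt0 ?expR_gt0 //.
rewrite -[X in expR X]mulr1 expRM_natl lerXn2r ?nnegrE ?expR_ge0 //.
by have := expR_ge1Dx (1 : R); lra.
Qed.

Lemma mul_sqr_le_expR (c r : R) : 0 < c -> 0 <= r -> c * r ^+ 2 <= expR (ln c + 2 * r).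
Proof.
move=> c_gt0 r_ge0; rewrite expRD lnK ?posrE // ler_pM2l // expRM_natl.
rewrite lerXn2r ?nnegrE ?expR_ge0 //.
by have := expR_ge1Dx r; lra.
Qed.

End exponential_bounds.

Section level_gap.
Context {R : realType} (d : nat).

(* [decay_const * (j + 1)] is the lower bound we obtain for the expected number
   [2^(d(eta j - k))] of retained subwords; [eps_const] is tuned so that
   [ln 2 * eps_const / 2 = ln decay_const + 2]. *)
Definition decay_const : R := d%:R * ln 2 + 1.
Definition eps_const : R := 2 * (ln decay_const + 2) / ln 2.
Definition level_eps (j : nat) : R := eps_const / Num.sqrt j.+1%:R.

Lemma ln_decay_const_ge0 : 0 <= ln decay_const.
Proof. by apply: ln_ge0; rewrite lerDr mulr_ge0 ?ler0n // ltW // ln2_gt0. Qed.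

Lemma level_eps_gt0 j : 0 < level_eps j.
Proof.
have := ln_decay_const_ge0; have := @ln2_gt0 R => L_gt0 lnc_ge0.
by rewrite divr_gt0 ?sqrtr_gt0 ?ltr0n // divr_gt0 // mulr_gt0 //; lra.
Qed.

Lemma level_eps_cvg0 : level_eps @ \oo --> 0.
Proof.
have -> : level_eps = (fun j => eps_const * Num.sqrt (harmonic j)).
  by apply/funext => j; rewrite /level_eps /= sqrtrV ?ler0n.
rewrite -(mulr0 eps_const) -sqrtr0; apply: cvgMl_tmp.
exact: cvg_comp cvg_harmonic (@sqrt_continuous R 0).
Qed.

Lemma level_gap_ge (eta : R) j k : (1 <= j)%N -> k%:R <= j%:R * (eta - level_eps j) ->
  ln decay_const + 2 * Num.sqrt j.+1%:R <= ln 2 * (eta * j%:R - k%:R).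
Proof.
move=> j_ge1 k_le.
set L := ln (2 : R); set r := Num.sqrt j.+1%:R; set x := eta * j%:R - k%:R.
have L_gt0 : 0 < L := ln2_gt0.
have lnc_ge0 := ln_decay_const_ge0.
have j_ge1R : 1 <= j%:R :> R by rewrite ler1n.
have r_sqr : r ^+ 2 = j%:R + 1 by rewrite sqr_sqrtr ?ler0n // -natr1.
have r_ge1 : 1 <= r by rewrite -sqrtr1 ler_sqrt ?ler1n.
have r_gt0 : 0 < r by apply: lt_le_trans r_ge1.
have CL : L * eps_const = 2 * (ln decay_const + 2).
  by rewrite mulrC /eps_const -/L divfK // gt_eqF.
have xr : j%:R * eps_const <= x * r.
  have e : (eta - eps_const / r) * r = eta * r - eps_const by rewrite mulrBl divfK ?gt_eqF.
  move: k_le; rewrite /level_eps -/r -(ler_pM2r r_gt0) -mulrA e /x; nra.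
have : L * (j%:R * eps_const) <= L * (x * r) by rewrite ler_pM2l.
rewrite mulrCA CL -(ler_pM2r r_gt0) => Lxr.
have : ln decay_const * r <= ln decay_const * (2 * j%:R) by apply: ler_wpM2l => //; nra.
nra.
Qed.

Lemma barren_bound_le_halves (eta : R) j k :
  (1 <= d)%N -> 0 < eta < 1 -> (1 <= j)%N -> (k <= j)%N ->
  k%:R <= j%:R * (eta - level_eps j) ->
  ((2 ^ d) ^ k)%N%:R * (1 - 2 `^ (- (d%:R * (1 - eta) * j%:R))) ^+ ((2 ^ d) ^ (j - k))%N
    <= (2 : R) ^- j.
Proof.
move=> d_ge1 /andP[eta_gt0 eta_lt1] j_ge1 kj k_le.
set L := ln (2 : R); set q := 2 `^ _; set x := eta * j%:R - k%:R.
have L_gt0 : 0 < L := ln2_gt0.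
have dL_ge0 : 0 <= d%:R * L by rewrite mulr_ge0 ?ler0n // ltW.
have c_gt0 : 0 < decay_const by rewrite /decay_const -/L; lra.
have gap : ln decay_const + 2 * Num.sqrt j.+1%:R <= L * x :=
  level_gap_ge _ _ _ j_ge1 k_le.
have Lx_ge0 : 0 <= L * x.
  by apply: le_trans gap; rewrite addr_ge0 ?ln_decay_const_ge0 ?mulr_ge0 ?sqrtr_ge0.
have qE : q = expR (- (d%:R * (1 - eta) * j%:R) * L) by rewrite /q /powR pnatr_eq0.
have q_le1 : q <= 1.
  rewrite qE -[leRHS]expR0 ler_expR mulNr oppr_le0.
  by rewrite !mulr_ge0 ?ler0n ?subr_ge0 // ltW.
have Nq : ((2 ^ d) ^ (j - k))%N%:R * q = expR (d%:R * (L * x)).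
  rewrite -expnM natrX expr2_expR qE -expRD; congr expR.
  by rewrite -/L natrM natrB // /x; ring.
have Nq_ge : decay_const * j.+1%:R <= expR (d%:R * (L * x)).
  rewrite -[j.+1%:R](@sqr_sqrtr R) ?ler0n //.
  apply: le_trans (mul_sqr_le_expR _ _ c_gt0 (sqrtr_ge0 _)) _; rewrite ler_expR.
  by apply: le_trans gap _; rewrite ler_peMl // ler1n.
have pow_k : ((2 ^ d) ^ k)%N%:R <= expR (d%:R * j%:R * L).
  by rewrite -expnM natrX expr2_expR ler_expR ler_pM2r // -natrM ler_nat leq_mul2l kj orbT.
apply: le_trans (expR_neg_le_halves j).
apply: le_trans (ler_pM (ler0n _ _) _ pow_k (one_sub_expr_le_expR _ _ q_le1)) _.
  by rewrite exprn_ge0 // subr_ge0.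
rewrite -expRD ler_expR Nq.
move: Nq_ge; rewrite /decay_const -/L -natr1; nra.
Qed.

End level_gap.

Section retained_descendants.
Context {R : realType} {d : nat} {eta : R} {dT : measure_display} {T : measurableType dT}
  {P : probability T R} {p : anyword d -> T -> bool}.
Hypothesis d_ge1 : (1 <= d)%N.
Hypothesis eta_bounds : 0 < eta < 1.
Hypothesis p_meas : forall w : anyword d, measurable [set t | p w t].
Hypothesis p_law : forall w : anyword d, (1 <= projT1 w)%N ->
  P [set t | p w t] = ((2 : R) `^ (- (d%:R * (1 - eta) * (projT1 w)%:R)))%:E.
Hypothesis p_indep : mutually_independent P
  (fun w : {w : anyword d | (1 <= projT1 w)%N} => p (sval w)).

Definition barren_event j k : set T :=
  [set t | has (fun W : word d k =>
             all (fun v => ~~ p (Tagged (word d) (word_cat j W v)) t) (enum (word d (j - k))))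
           (enum (word d k))].

Lemma measurable_barren_event j k : measurable (barren_event j k).
Proof.
apply: measurable_has => W; apply: measurable_all => v.
exact/measurable_negb/p_meas.
Qed.

Lemma prob_barren_event_le j k : (1 <= j)%N -> (k <= j)%N ->
  (P (barren_event j k) <= (((2 ^ d) ^ k)%N%:R *
     (1 - 2 `^ (- (d%:R * (1 - eta) * j%:R))) ^+ ((2 ^ d) ^ (j - k))%N)%:E)%E.
Proof.
move=> j_ge1 kj; set q := 2 `^ _.
pose child (W : word d k) v : {w : anyword d | (1 <= projT1 w)%N} :=
  exist _ (Tagged (word d) (word_cat j W v)) j_ge1.
apply: le_trans (le_measure_has _ P _ _ _) _ => [W|].
  by apply: measurable_all => v; exact/measurable_negb/p_meas.
rewrite (eq_bigr (fun=> ((1 - q) ^+ ((2 ^ d) ^ (j - k)))%:E)) => [|W _].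
  rewrite sumEFin lee_fin big_const_seq count_predT -cardE iter_addr_0.
  by rewrite -[leLHS]mulr_natl card_word.
have -> : ((2 ^ d) ^ (j - k))%N = size (map (child W) (enum (word d (j - k)))).
  by rewrite size_map -cardE card_word.
rewrite -(prob_none_indep _ _ q _ p_indep) => [|w||w].
- by apply: congr1; apply/seteqP; split => t /=; rewrite (all_map (child W)).
- exact: (p_meas (sval w)).
- rewrite map_inj_uniq ?enum_uniq // => v1 v2 /(congr1 sval) /= e.
  exact: word_cat_inj kj _ _ (eq_from_Tagged e).
- by move=> /mapP[v _ ->]; exact: p_law.
Qed.

Definition level j : int := Num.floor (j%:R * (eta - level_eps d j)).

(* A negative level is the length of no word, so then nothing can fail. *)
Definition bad_event j : set T :=
  if (0 <= level j) then barren_event j `|level j|%N else set0.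

Lemma level_le j : 0 <= level j ->
  (`|level j|%N)%:R <= j%:R * (eta - level_eps d j) /\ (`|level j| <= j)%N.
Proof.
move=> level_ge0; have k_le : (`|level j|%N)%:R <= j%:R * (eta - level_eps d j).
  by rewrite natr_absz ger0_norm // floor_le.
split => //; rewrite -(ler_nat R); apply: le_trans k_le _.
have := @level_eps_gt0 R d j; have : 0 <= j%:R :> R by [].
move: eta_bounds => /andP[? ?] ? ?; nra.
Qed.

Lemma measurable_bad_event j : measurable (bad_event j).
Proof. by rewrite /bad_event; case: ifP => _ //; exact: measurable_barren_event. Qed.

Lemma prob_bad_event_le j : (P (bad_event j) <= (2 ^- j)%:E)%E.
Proof.
rewrite /bad_event; case: ifP => [level_ge0|_]; last first.
  by rewrite measure0 lee_fin invr_ge0 exprn_ge0.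
have [-> | j_gt0] := posnP j.
  by rewrite expr0 invr1 probability_le1 //; exact: measurable_barren_event.
have [k_le kj] := level_le j level_ge0.
apply: le_trans (prob_barren_event_le _ _ j_gt0 kj) _; rewrite lee_fin.
exact: barren_bound_le_halves.
Qed.

Lemma ae_retained_descendant :
  {ae P, forall t, exists J : nat, forall j : nat, (J <= j)%N ->
    forall (k : nat) (W : word d k), k%:Z = Num.floor (j%:R * (eta - level_eps d j)) ->
    exists w : word d j, p (existT _ j w) t /\ @cube R d j w `<=` @cube R d k W}.
Proof.
have summable : (\sum_(j <oo) P (bad_event j) < +oo)%E.
  apply: le_lt_trans (nneseries_halves_lty R).
  apply: lee_nneseries => [j _ _|j _]; [exact: measure_ge0 | exact: prob_bad_event_le].
apply: filterS (ae_eventually_notin P _ measurable_bad_event summable).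
move=> t [J not_bad]; exists J => j Jj k W k_level.
have level_ge0 : 0 <= level j by rewrite /level -k_level.
have [_] := level_le j level_ge0; rewrite /level -k_level absz_nat => kj.
have := not_bad j Jj; rewrite /bad_event level_ge0 /level -k_level absz_nat /barren_event /=.
move/negP/hasPn/(_ W (mem_enum _ W)) => /allPn[v _ /negbNE p_child].
by exists (word_cat j W v); split; last apply: cube_word_cat_sub.
Qed.

End retained_descendants.

Theorem lemma2 (R : realType) (d : nat) (hd : (1 <= d)%N) (eta : R)
  (heta : 0 < eta < 1)
  (dT : measure_display) (T : measurableType dT) (P : probability T R)
  (p : anyword d -> T -> bool)
  (p_meas : forall w : anyword d, measurable [set t | p w t])
  (p_law : forall w : anyword d, (1 <= projT1 w)%N ->
     P [set t | p w t] = ((2 : R) `^ (- (d%:R * (1 - eta) * (projT1 w)%:R)))%:E)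
  (p_indep : mutually_independent P
     (fun w : {w : anyword d | (1 <= projT1 w)%N} => p (sval w))) :
  exists eps : nat -> R,
    (forall j, 0 < eps j) /\ eps @ \oo --> 0 /\
    {ae P, forall t,
       exists J : nat, forall j : nat, (J <= j)%N ->
         forall (k : nat) (W : word d k),
           (k%:Z = Num.floor (j%:R * (eta - eps j))) ->
           exists w : word d j, p (existT _ j w) t /\ @cube R d j w `<=` @cube R d k W}.
Proof.
exists (level_eps d); split; first exact: level_eps_gt0.
split; first exact: level_eps_cvg0.
exact: ae_retained_descendant hd heta p_meas p_law p_indep.
Qed.
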